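(* For every integer $d\ge 2$, the uniform probability measure $\mu^{\{0,1\}}_{n,d}$ on the set of $1$-Lipschitz functions $f\colon V(\mathbb{T}^n_d)\to\mathbb{Z}$ taking values in $\{0,1\}$ at every vertex at distance exactly $n$ from the root converges (in the local weak sense) as $n\to\infty$.
   Context: A $d$-ary tree $\mathbb{T}_d$ is an infinite tree with a distinguished root vertex $\rho$ of degree $d$, all other vertices having degree $d+1$. $\mathbb{T}^n_d$ is the finite subtree induced by the vertices at graph distance at most $n$ from $\rho$; its leaves are the vertices at distance exactly $n$. A $1$-Lipschitz function is an integer-valued function $f$ with $|f(u)-f(v)|\le 1$ for all adjacent $u,v$. Local weak convergence means: for every fixed $r\ge0$, the law of the restriction of $f$ to the vertices within distance $r$ of $\rho$ converges as $n\to\infty$ to a probability measure. *)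

From HB Require Import structures.
From mathcomp Require Import all_boot all_order all_algebra.
From mathcomp Require Import finmap.
From mathcomp Require Import all_classical all_reals all_analysis.
Unset Printing Implicit Defensive.
Import Order.TTheory GRing.Theory Num.Theory.
Local Open Scope classical_set_scope.
Local Open Scope ring_scope.

(* Vertices of the d-ary tree T_d: words over 'I_d.  The root rho is [::],
   the children of a vertex s are the words rcons s i (i : 'I_d), and the
   graph distance of s from the root is size s.  T^n_d consists of the words
   of size <= n; its edges are {s, rcons s i} with size s < n; its leaves are
   the words of size exactly n. *)

(* A configuration on T^n_d is a function seq 'I_d -> int which we normalize
   to be 0 outside the vertex set of T^n_d. *)
Definition supported_on (d n : nat) (f : seq 'I_d -> int) : Prop :=
  forall s, (n < size s)%N -> f s = 0.

Definition lipschitz1 (d n : nat) (f : seq 'I_d -> int) : Prop :=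
  forall (s : seq 'I_d) (i : 'I_d), (size s < n)%N -> `|f (rcons s i) - f s| <= 1.

Definition adm01 (d n : nat) : set (seq 'I_d -> int) :=
  [set f | [/\ supported_on d n f, lipschitz1 d n f &
             forall s : seq 'I_d, size s = n -> (f s = 0 \/ f s = 1)]].

Definition restr (d r : nat) (f : seq 'I_d -> int) : seq 'I_d -> int :=
  fun s => if (size s <= r)%N then f s else 0.

Definition cnt {T : choiceType} (A : set T) : nat := #|` fset_set A|%fset.

Definition law (R : realType) (d n r : nat) (g : seq 'I_d -> int) : R :=
  (cnt (adm01 d n `&` [set f | restr d r f = g]))%:R / (cnt (adm01 d n))%:R.

(* Write Z_n(k) for the number of admissible configurations on T^n_d with
   root value k.  Cutting at the root gives
   Z_(n+1)(k) = (Z_n(k-1) + Z_n(k) + Z_n(k+1))^d and Z_n(1-k) = Z_n(k); more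
   generally the number of configurations on T^(m+r)_d with a prescribed
   1-Lipschitz restriction g to the r-ball is a product, over the leaves of
   the ball, of the Z_m at the values of g.  Normalising by Z_m(1), the law of the r-ball
   under mu_(m+r) becomes a quotient of expressions with nonnegative
   coefficients in the ratios x_m(k) = Z_m(k) / Z_m(1).  Two estimates drive
   the proof: the pair (Z_m, Z_(m+1)) is totally positive of order two on
   k >= 1, which the recursion preserves, so x_m(k) is nondecreasing in m;
   and x_m(k+1) <= 2^-k uniformly in m.  Hence numerator and denominator are
   monotone and bounded, the laws converge, and the geometric decay of the
   root value keeps the limit a probability measure. *)

From HB Require Import structures.
From mathcomp Require Import all_boot all_order all_algebra.
From mathcomp Require Import finmap.
From mathcomp Require Import all_classical all_reals all_analysis.
From mathcomp Require Import lra ring zify.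
Import Order.TTheory GRing.Theory Num.Theory numFieldNormedType.Exports.
Local Open Scope classical_set_scope.
Local Open Scope ring_scope.

(** * Counting finite sets *)

Section Counting.
Context {T : choiceType}.
Implicit Types A B : set T.

Lemma cnt_set0 : cnt (@set0 T) = 0%N.
Proof. by rewrite /cnt fset_set0 cardfs0. Qed.

Lemma cnt_set1 (x : T) : cnt [set x] = 1%N.
Proof. by rewrite /cnt fset_set1 cardfs1. Qed.

Lemma cnt_setU A B : finite_set A -> finite_set B -> A `&` B = set0 ->
  cnt (A `|` B) = (cnt A + cnt B)%N.
Proof.
move=> fA fB AB; rewrite /cnt fset_setU // cardfsU -fset_setI // AB.
by rewrite fset_set0 cardfs0 subn0.
Qed.

Lemma le_cnt A B : A `<=` B -> finite_set B -> (cnt A <= cnt B)%N.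
Proof.
move=> AB fB; have fA : finite_set A := sub_finite_set AB fB.
by rewrite /cnt; apply: fsubset_leq_card; rewrite -fset_set_sub.
Qed.

Lemma cnt_fibers (U : choiceType) A (phi : T -> U) (s : seq U) :
  finite_set A -> uniq s ->
  cnt (A `&` [set x | phi x \in s]) =
    (\sum_(y <- s) cnt (A `&` [set x | phi x = y]))%N.
Proof.
move=> fA; elim: s => [_|y s IH /= /andP[ys us]].
  by rewrite big_nil -cnt_set0; congr cnt; apply/seteqP; split=> x // [].
rewrite big_cons -IH // -cnt_setU; try exact: finite_setIl.
  congr cnt; apply/seteqP; split=> x /=; rewrite inE.
    by case=> Ax /orP[/eqP|]; [left|right].
  by case=> -[Ax ->]; split; rewrite ?eqxx ?orbT.
by apply/seteqP; split=> x // [[_ /= ->] [_ /=]]; rewrite (negbTE ys).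
Qed.

Lemma cnt_image (U : choiceType) (f : T -> U) A :
  finite_set A -> {in A &, injective f} -> cnt (f @` A) = cnt A.
Proof.
move=> fA inj; rewrite /cnt fset_set_image // card_in_imfset // => x y.
by rewrite !in_fset_set // => xA yA; exact: inj.
Qed.

End Counting.

Lemma cnt_setX (T U : choiceType) (A : set T) (B : set U) :
  finite_set A -> finite_set B -> cnt (A `*` B) = (cnt A * cnt B)%N.
Proof.
move=> fA fB; have fAB : finite_set (A `*` B) := finite_setX fA fB.
have -> : A `*` B = (A `*` B) `&` [set x | x.1 \in (fset_set A : seq T)].
  apply/seteqP; split=> [[x y] /= [Ax By]|x [] //].
  by split=> //; rewrite in_fset_set // inE.
rewrite cnt_fibers // ?fset_uniq // (eq_big_seq (fun _ => cnt B)).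
  by rewrite big_const_seq count_predT iter_addn_0 mulnC.
move=> a; rewrite in_fset_set // inE => Aa.
rewrite -[RHS](@cnt_image _ _ (pair a)) //; last by move=> x y _ _ [].
congr cnt; apply/seteqP; split=> [[x y] /= [[_ By] <-]|_ [y By <-]] //.
by exists y.
Qed.

(** * Configurations on the tree *)

Section Graft.
Variable d : nat.
Local Notation F := (seq 'I_d -> int).

Definition subtree (f : F) (i : 'I_d) : F := fun s => f (i :: s).

Definition at_root (k : int) : F := fun s => if s is [::] then k else 0.

Definition graft (k : int) (S : 'I_d -> set F) : set F :=
  [set f | f [::] = k /\ forall i : 'I_d, S i (subtree f i)].

Definition graft_upto (j : nat) (k : int) (S : 'I_d -> set F) : set F :=
  [set f | [/\ f [::] = k, forall i : 'I_d, (i < j)%N -> S i (subtree f i) &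
              forall (i : 'I_d) s, (j <= i)%N -> f (i :: s) = 0]].

Definition graft_at (j : nat) (p : F * F) : F := fun s =>
  if s is i :: s' then (if i == j :> nat then p.2 s' else p.1 s) else p.1 s.

Lemma graft_upto0 k S : graft_upto 0 k S = [set at_root k].
Proof.
apply/seteqP; split=> [f [f0 _ fz]|_ ->] //=.
by apply/funext=> -[|i s] //=; rewrite fz.
Qed.

Lemma graft_uptoS j k S (jd : (j < d)%N) :
  graft_upto j.+1 k S = graft_at j @` (graft_upto j k S `*` S (Ordinal jd)).
Proof.
apply/seteqP; split=> [f [f0 fS fz]|_ [[f h] [[f0 fS fz] Sh] <-]].
  exists (graft_at j (f, fun=> 0), subtree f (Ordinal jd)).
    split; [split => // i|exact: fS (Ordinal jd) _].
    - by move=> ij; rewrite /subtree /graft_at /= ltn_eqF //; apply: fS; lia.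
    - move=> s; rewrite leq_eqVlt /graft_at /= => /orP[/eqP <-|ji]; first by rewrite eqxx.
      by rewrite gtn_eqF // fz.
  apply/funext=> -[|i s] //=; rewrite /graft_at /=.
  by case: eqP => // ij; rewrite /subtree; do 2 f_equal; apply: val_inj.
split=> // [i|i s ji]; rewrite /subtree /graft_at /=.
  rewrite ltnS leq_eqVlt => /orP[/eqP ij|ij]; last by rewrite ltn_eqF //; exact: fS.
  have -> : i = Ordinal jd by exact: val_inj.
  by rewrite eqxx.
by rewrite (gtn_eqF ji); apply: fz; lia.
Qed.

Lemma graft_at_inj j k S (jd : (j < d)%N) :
  {in graft_upto j k S `*` S (Ordinal jd) &, injective (graft_at j)}.
Proof.
move=> [f h] [f' h']; rewrite !inE => -[[/= f0 _ fz] _] [[/= f0' _ fz'] _] E.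
congr pair; apply/funext.
  move=> [|i s]; first by rewrite f0 f0'.
  have := congr1 (fun g : F => g (i :: s)) E; rewrite /graft_at /=.
  by case: eqP => [ij _|_ ->//]; rewrite fz ?fz' //; lia.
move=> s; have := congr1 (fun g : F => g (Ordinal jd :: s)) E.
by rewrite /graft_at /= eqxx.
Qed.

Lemma graft_upto_finite_cnt j k S : (j <= d)%N -> (forall i, finite_set (S i)) ->
  finite_set (graft_upto j k S) /\
  cnt (graft_upto j k S) = (\prod_(i < d | (i < j)%N) cnt (S i))%N.
Proof.
move=> + fS; elim: j => [|j IH] jd.
  by rewrite graft_upto0 big_pred0 // cnt_set1; split => //; exact: finite_set1.
have [fP cP] := IH (ltnW jd).
have fX : finite_set (graft_upto j k S `*` S (Ordinal jd)) by exact: finite_setX.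
rewrite graft_uptoS; split; first exact: finite_image.
rewrite cnt_image ?cnt_setX ?cP //; last exact: graft_at_inj.
rewrite [RHS](bigD1 (Ordinal jd)) //= mulnC; congr (_ * _)%N.
by apply: eq_bigl => i; rewrite -val_eqE /= ltnS andbC -ltn_neqAle.
Qed.

Lemma graftE k S : graft k S = graft_upto d k S.
Proof.
apply/seteqP; split=> [f [f0 fS]|f [f0 fS _]]; split=> // i.
- by have := ltn_ord i; lia.
- exact: fS.
Qed.

Lemma finite_graft k S : (forall i, finite_set (S i)) ->
  finite_set (graft k S).
Proof.
by move=> fS; rewrite graftE; case: (graft_upto_finite_cnt d k S (leqnn d) fS).
Qed.

Lemma cnt_graft k S : (forall i, finite_set (S i)) ->
  cnt (graft k S) = (\prod_(i < d) cnt (S i))%N.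
Proof.
move=> fS; rewrite graftE.
have [_ ->] := graft_upto_finite_cnt d k S (leqnn d) fS.
by apply: eq_bigl => i; rewrite ltn_ord.
Qed.

End Graft.

Arguments subtree {d} f i.
Arguments at_root {d} k.
Arguments graft {d} k S.
Arguments finite_graft {d} k S.
Arguments cnt_graft {d} k S.

Definition root_range (n : nat) : seq int :=
  [seq i%:Z - n%:Z | i <- iota 0 (2 * n + 2)].

Lemma mem_root_range n k : (k \in root_range n) = (- n%:Z <= k <= n%:Z + 1).
Proof.
apply/mapP/idP => [[i]|kn]; first by rewrite mem_iota => /andP[_ ?] ->; apply/andP; lia.
by exists `|(k + n%:Z)%R|%N; [rewrite mem_iota; apply/andP|]; lia.
Qed.

Lemma root_range_uniq n : uniq (root_range n).
Proof. by rewrite map_inj_uniq ?iota_uniq // => i j; lia. Qed.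

Lemma root_rangeS n :
  root_range n.+1 = - n.+1%:Z :: rcons (root_range n) n.+2%:Z.
Proof.
rewrite /root_range (_ : (2 * n.+1 + 2 = (2 * n + 2).+1 + 1)%N); last by lia.
rewrite iotaD /= -cats1 map_cat; congr (_ :: _ ++ _); first by lia.
  by rewrite -[1%N]addn0 iotaDl -map_comp; apply: eq_map => i /=; lia.
by rewrite /=; congr cons; lia.
Qed.

Lemma big_root_rangeS (V : nmodType) (P : pred int) (F : int -> V) n :
  \sum_(k <- root_range n.+1 | P k) F k =
  (if P (- n.+1%:Z) then F (- n.+1%:Z) else 0) + \sum_(k <- root_range n | P k) F k +
  (if P n.+2%:Z then F n.+2%:Z else 0).
Proof.
by rewrite root_rangeS big_cons big_rcons; case: ifP => _; rewrite ?add0r ?addrA.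
Qed.

Section Admissible.
Variable d : nat.
Local Notation F := (seq 'I_d -> int).
Local Notation A n := (adm01 d n).

Lemma adm01S n (f : F) : A n.+1 f <->
  (forall i, A n (subtree f i)) /\ (forall i : 'I_d, `|f [:: i] - f [::]| <= 1).
Proof.
split=> [[fs fl fv]|[fA fr]].
  split=> [i|i]; last exact: fl [::] i _.
  split=> [s sn|s j sn|s sn]; [apply: fs|apply: fl (i :: s) j _|apply: fv].
  - by rewrite /=; lia.
  - by rewrite /=; lia.
  - by rewrite /= sn.
split=> [[|i s] //= sn|[|i s] j /= sn|[|i s] //= [sn]]; first 2 [exact: fr].
- by have [+ _ _] := fA i; apply; lia.
- by have [_ + _] := fA i; apply; lia.
- by have [_ _ +] := fA i; apply.
Qed.

Lemma adm01_0 : A 0 = [set at_root 0; at_root 1].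
Proof.
apply/seteqP; split=> [f [fs _ fv]|f].
  have -> : f = at_root (f [::]) by apply/funext=> -[|i s] //; apply: fs.
  by case: (fv [::] erefl) => ->; [left|right].
by case=> ->; split=> [[|i s]|s i|[|i s] _] //; [left|right].
Qed.

Lemma adm01_path n (f : F) s : A n f -> (size s <= n)%N ->
  `|f s - f [::]| <= (size s)%:Z.
Proof.
move=> [_ fl _]; elim/last_ind: s => [|s i IH]; first by rewrite subrr.
rewrite size_rcons => sn; have := ler_normD (f (rcons s i) - f s) (f s - f [::]).
rewrite addrA subrK => /le_trans; apply.
by rewrite -addn1 PoszD addrC lerD // ?IH ?fl // ltnW.
Qed.

Hypothesis d_gt0 : (0 < d)%N.

Lemma adm01_root_range n (f : F) : A n f -> f [::] \in root_range n.
Proof.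
rewrite mem_root_range; elim: n f => [|n IH] f.
  by rewrite adm01_0 => -[] ->.
case/adm01S => fA /(_ (Ordinal d_gt0)); have := IH _ (fA (Ordinal d_gt0)).
by rewrite /subtree ler_norml; lia.
Qed.

Lemma finite_adm01 n : finite_set (A n).
Proof.
elim: n => [|n IH].
  by rewrite adm01_0; exact: finite_set2.
apply: (@sub_finite_set _ _
  (\bigcup_(k in [set` root_range n.+1]) graft k (fun _ => A n))).
  move=> f fA; exists (f [::]); first exact: adm01_root_range.
  by split=> //; case/adm01S: fA.
by apply: bigcup_finite; [exact: finite_seq|move=> k _; exact: finite_graft].
Qed.

End Admissible.

Definition root_count (d n : nat) (k : int) : nat :=
  cnt (adm01 d n `&` [set f | f [::] = k]).

Definition restr_count (d n r : nat) (g : seq 'I_d -> int) : nat :=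
  cnt (adm01 d n `&` [set f | restr d r f = g]).

Section Counts.
Variable d : nat.
Hypothesis d_gt0 : (0 < d)%N.
Local Notation F := (seq 'I_d -> int).
Local Notation A n := (adm01 d n).

Lemma cnt_adm01_root n (P : pred int) :
  cnt (A n `&` [set f | P (f [::])]) =
    (\sum_(k <- root_range n | P k) root_count d n k)%N.
Proof.
rewrite -big_filter -cnt_fibers ?filter_uniq ?root_range_uniq //.
  2: exact: finite_adm01.
congr cnt; apply/seteqP; split=> f [fA Pf]; split=> //=.
  by rewrite /= mem_filter Pf adm01_root_range.
by move: Pf; rewrite /= mem_filter => /andP[].
Qed.

Lemma cnt_adm01 n : cnt (A n) = (\sum_(k <- root_range n) root_count d n k)%N.
Proof.
by rewrite -(cnt_adm01_root n predT); congr cnt; apply/seteqP; split=> f // [].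
Qed.

Lemma root_count0 k : root_count d 0 k = if (k == 0) || (k == 1) then 1%N else 0%N.
Proof.
rewrite /root_count adm01_0; case: ifP => hk.
  rewrite -(cnt_set1 (at_root k : F)); congr cnt; apply/seteqP.
  split=> [f [[]-> /= <-]|_ ->] //; split=> //=.
  by case/orP: hk => /eqP ->; [left|right].
rewrite (_ : _ `&` _ = set0) ?cnt_set0 //; apply/seteqP.
by split=> // f [[]-> /= k01]; move: hk; rewrite -k01.
Qed.

Lemma root_countS n k : root_count d n.+1 k =
  ((root_count d n (k - 1) + root_count d n k + root_count d n (k + 1)) ^ d)%N.
Proof.
rewrite {1}/root_count.
have -> : A n.+1 `&` [set f | f [::] = k] =
    graft k (fun _ => A n `&` [set h | h [::] \in [:: k - 1; k; k + 1]]).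
  apply/seteqP; split=> [f [/adm01S[fA fr] fk]|f [fk fS]].
    split=> // i; split; first exact: fA.
    by move: (fr i); rewrite fk /subtree /= !inE ler_norml; lia.
  split=> //; apply/adm01S; split=> i; first by case: (fS i).
  by case: (fS i) => _; rewrite /subtree /= !inE fk; lia.
rewrite cnt_graft => [|i]; last by apply: finite_setIl; exact: finite_adm01.
rewrite prod_nat_const card_ord cnt_fibers; last by rewrite /= !inE; lia.
  by rewrite !big_cons big_nil addn0 addnA.
exact: finite_adm01.
Qed.

Lemma root_count_sym n k : root_count d n (1 - k) = root_count d n k.
Proof.
elim: n k => [|n IH] k.
  by rewrite !root_count0; congr (if _ then _ else _); apply/idP/idP; lia.
rewrite !root_countS -[in RHS](IH (k - 1)) -[in RHS](IH k) -[in RHS](IH (k + 1)).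
have -> : 1 - (k - 1) = 1 - k + 1 by lia.
have -> : 1 - (k + 1) = 1 - k - 1 by lia.
by congr (_ ^ _)%N; rewrite [LHS]addnC (addnC (root_count d n (1 - k - 1))) addnA.
Qed.

Lemma restr_count0 n g : restr_count d n 0 g =
  if `[< g = at_root (g [::]) >] then root_count d n (g [::]) else 0%N.
Proof.
case: asboolP => g0; last first.
  rewrite /restr_count (_ : _ `&` _ = set0) ?cnt_set0 //.
  apply/seteqP; split=> f // [_ fg]; apply: g0.
  by apply/funext=> -[|i s]; rewrite -fg.
rewrite /restr_count /root_count; congr cnt; apply/seteqP.
split=> f [fA fg]; split=> //=; first by rewrite -fg.
by rewrite g0; apply/funext=> -[|i s]; rewrite /restr /= ?fg.
Qed.

Lemma restr_countS n r g : restr_count d n.+1 r.+1 g =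
  if [forall i : 'I_d, `|g [:: i] - g [::]| <= 1]
  then (\prod_(i < d) restr_count d n r (subtree g i))%N else 0%N.
Proof.
case: forallP => glip; last first.
  rewrite /restr_count (_ : _ `&` _ = set0) ?cnt_set0 //.
  apply/seteqP; split=> f // [/adm01S[_ fr] /= fg].
  by apply: glip => i; rewrite -fg; exact: fr.
rewrite /restr_count; set S := fun i => A n `&` [set h | restr d r h = subtree g i].
rewrite -(cnt_graft (g [::]) S) => [|i]; last by apply: finite_setIl; exact: finite_adm01.
congr cnt; apply/seteqP; split=> [f [/adm01S[fA _] fg]|f [f0 fS]].
  split=> [|i]; first by rewrite -fg.
  split; first exact: fA.
  by apply/funext=> s; rewrite -fg.
have fg i : restr d r (subtree f i) = subtree g i by case: (fS i).
split.
  apply/adm01S; split=> i; first by case: (fS i).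
  have := congr1 (fun h : F => h [::]) (fg i); rewrite /restr /subtree /= => ->.
  by rewrite f0.
apply/funext=> -[|i s]; first by rewrite /restr /= f0.
exact: (congr1 (fun h : F => h s) (fg i)).
Qed.

End Counts.

(** * Total positivity and decay of the root counts *)

Section NeighbourSum.
Context {R : realFieldType}.
Implicit Types A B : int -> R.

Definition nbr_sum A (k : int) : R := A (k - 1) + A k + A (k + 1).

Definition tp2 A B : Prop :=
  forall p q : int, 1 <= p -> p <= q -> A q * B p <= A p * B q.

Lemma nbr_sum_ge0 A k : (forall k, 0 <= A k) -> 0 <= nbr_sum A k.
Proof. by move=> A0; rewrite /nbr_sum !addr_ge0. Qed.

Lemma ler_nbr_sum A B k : (forall k, A k <= B k) -> nbr_sum A k <= nbr_sum B k.
Proof. by move=> AB; rewrite /nbr_sum !lerD. Qed.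

Lemma tp2_from0 A B : A 0 = A 1 -> B 0 = B 1 -> tp2 A B ->
  forall p q : int, 0 <= p -> p <= q -> A q * B p <= A p * B q.
Proof.
move=> eA eB AB p q p0 pq; have [->|p1] := eqVneq p 0; last by apply: AB; lia.
have [->|q1] := eqVneq q 0; first by [].
by rewrite eA eB; apply: AB; lia.
Qed.

Lemma ler_sum3_mul (a1 a2 a3 b1 b2 b3 c1 c2 c3 e1 e2 e3 : R) :
  c1 * b1 <= a1 * e1 -> c2 * b1 <= a1 * e2 -> c3 * b1 <= a1 * e3 ->
  c1 * b2 <= a2 * e1 -> c2 * b2 <= a2 * e2 -> c3 * b2 <= a2 * e3 ->
  c1 * b3 <= a3 * e1 -> c2 * b3 <= a3 * e2 -> c3 * b3 <= a3 * e3 ->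
  (c1 + c2 + c3) * (b1 + b2 + b3) <= (a1 + a2 + a3) * (e1 + e2 + e3).
Proof. by move=> *; lra. Qed.

(* For q >= p + 2 the nine products compare termwise; for q = p + 1 the
   common block (A p + A (p+1)) * (B p + B (p+1)) cancels and the five
   remaining comparisons suffice. *)
Lemma tp2_nbr_sum A B : A 0 = A 1 -> B 0 = B 1 -> tp2 A B ->
  tp2 (nbr_sum A) (nbr_sum B).
Proof.
move=> eA eB AB p q p1 pq; have AB0 := @tp2_from0 A B eA eB AB.
have [->|qp] := eqVneq q p; first exact: lexx.
rewrite /nbr_sum; have [->|qp1] := eqVneq q (p + 1).
  rewrite addrK -[p + 1 + 1]addrA (_ : 1 + 1 = 2 :> int) //.
  have h1 := AB0 (p - 1) p ltac:(lia) ltac:(lia).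
  have h2 := AB0 (p - 1) (p + 1) ltac:(lia) ltac:(lia).
  have h3 := AB0 (p - 1) (p + 2) ltac:(lia) ltac:(lia).
  have h4 := AB0 p (p + 2) ltac:(lia) ltac:(lia).
  have h5 := AB0 (p + 1) (p + 2) ltac:(lia) ltac:(lia).
  lra.
by apply: ler_sum3_mul; apply: AB0; lia.
Qed.

Lemma tp2X A B n : (forall k, 0 <= A k) -> (forall k, 0 <= B k) -> tp2 A B ->
  tp2 (fun k => A k ^+ n) (fun k => B k ^+ n).
Proof.
move=> A0 B0 AB p q p1 pq; rewrite -!exprMn.
by apply: lerXn2r; rewrite ?nnegrE ?mulr_ge0 //; exact: AB.
Qed.

End NeighbourSum.

Lemma lerXn_of_sq (R : realDomainType) (n : nat) (u w c : R) : (2 <= n)%N ->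
  0 <= u <= w -> 0 <= c -> u ^+ 2 * c <= w ^+ 2 -> u ^+ n * c <= w ^+ n.
Proof.
move=> n2 /andP[u0 uw] c0 h; rewrite -(subnK n2) !exprD -mulrA.
apply: ler_pM => //; rewrite ?mulr_ge0 ?exprn_ge0 //.
by apply: lerXn2r; rewrite ?nnegrE // (le_trans u0).
Qed.

(* 10 (a + b + c) <= 7 (2 a + b), and 2 * 7^2 < 10^2. *)
Lemma decay_window_top (R : realFieldType) (n : nat) (a b c : R) : (2 <= n)%N ->
  0 <= a -> 0 <= b -> 0 <= c -> b * 2 <= a -> c * 2 ^+ 2 <= a ->
  (a + b + c) ^+ n * 2 <= (a + a + b) ^+ n.
Proof.
move=> n2 a0 b0 c0 ba; rewrite expr2 => ca.
apply: lerXn_of_sq; rewrite // ?addr_ge0 //=; first lra.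
have : 10 * (a + b + c) <= 7 * (a + a + b) by lra.
by rewrite !expr2; nra.
Qed.

(* With u := u2 + u3 + u4 we have u Q <= 7/4 a, so that
   2 Q u^2 <= 49 a^2 / (8 Q) <= 4 a^2 <= (2 a + b)^2. *)
Lemma decay_window_far (R : realFieldType) (n : nat) (Q a b u2 u3 u4 : R) :
  (2 <= n)%N -> 2 <= Q -> 0 <= a -> 0 <= b -> 0 <= u2 -> 0 <= u3 -> 0 <= u4 ->
  u2 * Q <= a -> u3 * (2 * Q) <= a -> u4 * (2 * (2 * Q)) <= a ->
  (u2 + u3 + u4) ^+ n * (2 * Q) <= (a + a + b) ^+ n.
Proof.
move=> n2 Q2 a0 b0 *.
have uQ : 4 * ((u2 + u3 + u4) * Q) <= 7 * a by lra.
have u0 : 0 <= u2 + u3 + u4 by lra.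
have aw : 2 * a <= a + a + b by lra.
move: uQ u0 aw; move: (u2 + u3 + u4) (a + a + b) => u w uQ u0 aw.
apply: lerXn_of_sq; rewrite // ?u0 ?mulr_ge0 //=; try lra; first by nra.
rewrite -(ler_pM2l (_ : 0 < Q)); last by lra.
have uQ0 : 0 <= u * Q by rewrite mulr_ge0 //; lra.
have v2 : 16 * ((u * Q) * (u * Q)) <= 49 * (a * a) by nra.
have w2 : 4 * (a * a) <= w * w by nra.
have -> : Q * (u ^+ 2 * (2 * Q)) = 2 * ((u * Q) * (u * Q)) by ring.
by rewrite expr2; nra.
Qed.

Section LipStep.
Context {R : realFieldType} (d : nat).
Implicit Types A B : int -> R.

Definition lip_step A : int -> R := fun k => nbr_sum A k ^+ d.

Lemma lip_step_ge0 A k : (forall k, 0 <= A k) -> 0 <= lip_step A k.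
Proof. by move=> A0; rewrite exprn_ge0 // nbr_sum_ge0. Qed.

Lemma lip_stepZ c A : lip_step (fun k => c * A k) = fun k => c ^+ d * lip_step A k.
Proof. by apply/funext=> k; rewrite /lip_step /nbr_sum -!mulrDr exprMn. Qed.

Lemma iter_lip_stepZ c A r :
  iter r lip_step (fun k => c * A k) = fun k => c ^+ (d ^ r) * iter r lip_step A k.
Proof.
elim: r => [|r IH]; first by apply/funext=> k; rewrite expn0 expr1.
by rewrite iterS IH lip_stepZ; apply/funext=> k; rewrite -exprM expnSr.
Qed.

Lemma iter_lip_step_ge0 A r k : (forall k, 0 <= A k) -> 0 <= iter r lip_step A k.
Proof. by move=> A0; elim: r k => [|r IH] k //=; exact: lip_step_ge0. Qed.

Lemma iter_lip_step_le A B r : (forall k, 0 <= A k) -> (forall k, A k <= B k) ->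
  forall k, iter r lip_step A k <= iter r lip_step B k.
Proof.
move=> A0 AB; elim: r => [|r IH] k //=.
have B0 k' : 0 <= iter r lip_step B k' := le_trans (iter_lip_step_ge0 A r k' A0) (IH k').
apply: lerXn2r; rewrite ?nnegrE ?nbr_sum_ge0 //; last exact: ler_nbr_sum.
by move=> k'; exact: iter_lip_step_ge0.
Qed.

Lemma iter_lip_step_ge1 A r : (forall k, 0 <= A k) -> 1 <= A 1 ->
  1 <= iter r lip_step A 1.
Proof.
move=> A0 A1; elim: r => [|r IH] //=; apply: exprn_ege1; rewrite /nbr_sum.
have := iter_lip_step_ge0 A r (1 - 1) A0.
by have := iter_lip_step_ge0 A r (1 + 1) A0; lra.
Qed.

Lemma tp2_lip_step A B : (forall k, 0 <= A k) -> (forall k, 0 <= B k) ->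
  A 0 = A 1 -> B 0 = B 1 -> tp2 A B -> tp2 (lip_step A) (lip_step B).
Proof.
move=> A0 B0 eA eB AB; apply: tp2X; try by move=> k; exact: nbr_sum_ge0.
exact: tp2_nbr_sum.
Qed.

Hypothesis d2 : (2 <= d)%N.

Lemma lip_step_decay A : (forall k, 0 <= A k) -> A 0 = A 1 ->
  (forall j : nat, A j.+1 * 2 ^+ j <= A 1) ->
  forall j : nat, lip_step A j.+1 * 2 ^+ j <= lip_step A 1.
Proof.
move=> A0 eA dec [|[|i]]; first by rewrite mulr1.
  rewrite /lip_step /nbr_sum eA expr1.
  change ((A 1 + A 2 + A 3) ^+ d * 2 <= (A 1 + A 1 + A 2) ^+ d).
  by apply: decay_window_top => //; [exact: dec 1%N|exact: dec 2%N].
rewrite /lip_step /nbr_sum eA.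
have -> : i.+3%:Z - 1 = i.+2%:Z by lia.
have -> : i.+3%:Z + 1 = i.+4%:Z by lia.
rewrite (exprS _ i.+1); apply: decay_window_far => //.
by rewrite exprS ler_peMr ?exprn_ege1 //; lra.
Qed.

End LipStep.

Definition geom01 {R : realFieldType} (k : int) : R :=
  2^-1 ^+ (if 1 <= k then `|k - 1|%N else `|k|%N).

Definition root_ratio {R : realFieldType} (d n : nat) (k : int) : R :=
  (root_count d n k)%:R / (root_count d n 1)%:R.

Section RootRatio.
Context {R : realFieldType} (d : nat).
Hypothesis d2 : (2 <= d)%N.
Let d_gt0 : (0 < d)%N := ltnW d2.
Local Notation z n := (fun k : int => (root_count d n k)%:R : R).
Local Notation x := (@root_ratio R d).

Lemma natr_root_countS n : z n.+1 = lip_step d (z n).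
Proof. by apply/funext=> k; rewrite root_countS // natrX !natrD. Qed.

Lemma natr_root_count_iter m r : z (m + r) = iter r (lip_step d) (z m).
Proof. by elim: r => [|r IH]; rewrite ?addn0 // addnS natr_root_countS IH. Qed.

Lemma natr_root_count01 n : z n 0 = z n 1.
Proof. by rewrite /= -(root_count_sym d d_gt0 n 1). Qed.

Lemma root_count1_gt0 n : (0 < root_count d n 1)%N.
Proof.
elim: n => [|n IH]; first by rewrite root_count0.
by rewrite root_countS // expn_gt0; apply/orP; left; lia.
Qed.

Lemma tp2_root_count n : tp2 (z n) (z n.+1).
Proof.
elim: n => [p q p1 pq|n IH].
  have [q01|q01] := boolP ((q == 0) || (q == 1)).
    by have -> : q = p by case/orP: q01 => /eqP; lia.
  by rewrite /= [root_count d 0 q]root_count0 (negbTE q01) mul0r mulr_ge0.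
rewrite (natr_root_countS n.+1) {1}(natr_root_countS n).
by apply: tp2_lip_step => // *; exact: natr_root_count01.
Qed.

Lemma root_count_decay n (j : nat) : z n j.+1 * 2 ^+ j <= z n 1.
Proof.
elim: n j => [|n IH] j.
  by rewrite !root_count0; case: j => [|j]; rewrite ?mulr1 ?mul0r.
have := lip_step_decay d d2 (z n) (fun=> ler0n _ _) (natr_root_count01 n) IH j.
by rewrite -natr_root_countS.
Qed.

Lemma natr_root_countE n k : z n k = z n 1 * x n k.
Proof. by rewrite /root_ratio mulrC divfK // pnatr_eq0 -lt0n root_count1_gt0. Qed.

Lemma root_ratio_ge0 n k : 0 <= x n k.
Proof. by rewrite divr_ge0. Qed.

Lemma root_ratio1 n : x n 1 = 1.
Proof. by rewrite /root_ratio divff // pnatr_eq0 -lt0n root_count1_gt0. Qed.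

Lemma root_ratio_sym n k : x n (1 - k) = x n k.
Proof. by rewrite /root_ratio root_count_sym. Qed.

Lemma root_ratio_le_succ n k : x n k <= x n.+1 k.
Proof.
wlog k1 : k / 1 <= k.
  by move=> le; have [/le//|k0] := lerP 1 k; rewrite -!(root_ratio_sym _ k) le //; lia.
rewrite /root_ratio ler_pdivrMr ?ltr0n ?root_count1_gt0 // mulrAC.
rewrite ler_pdivlMr ?ltr0n ?root_count1_gt0 // [X in _ <= X]mulrC.
exact: tp2_root_count.
Qed.

Lemma root_ratio_le_geom01 n k : x n k <= geom01 k.
Proof.
have dec (j : nat) : x n j.+1 <= 2^-1 ^+ j.
  rewrite exprVn /root_ratio ler_pdivrMr ?ltr0n ?root_count1_gt0 //.
  by rewrite mulrC ler_pdivlMr ?exprn_gt0 //; exact: root_count_decay.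
rewrite /geom01; case: ifP => k1.
  by rewrite {1}(_ : k = (`|k - 1|%N).+1); [exact: dec|lia].
by rewrite -root_ratio_sym (_ : 1 - k = (`|k|%N).+1); [exact: dec|lia].
Qed.

End RootRatio.

Section Geom01.
Context {R : realFieldType}.
Local Notation h := (2^-1 : R).

Lemma geom01_le1 k : geom01 k <= 1 :> R.
Proof. by rewrite exprn_ile1 // ?invr_ge0 // invf_le1 //; lra. Qed.

Lemma geom01_ends n : geom01 (- n.+1%:Z) = h ^+ n.+1 /\ geom01 n.+2%:Z = h ^+ n.+1.
Proof. by rewrite /geom01; split; congr (_ ^+ _); case: ifP; lia. Qed.

Lemma sum_geom01 n : \sum_(k <- root_range n) geom01 k = 4 - 2 * h ^+ n.
Proof.
elim: n => [|n IH].
  by rewrite /root_range /= !big_cons big_nil /geom01 /=; lra.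
by rewrite big_root_rangeS IH; have [-> ->] := geom01_ends n; rewrite exprS; lra.
Qed.

Lemma sum_geom01_tail0 K n : (n < K)%N ->
  \sum_(k <- root_range n | K%:Z < `|k|) geom01 k = 0 :> R.
Proof.
move=> nK; rewrite big1_seq // => k /andP[Kk]; rewrite mem_root_range => kn.
by move: Kk; rewrite ltNge ler_norml; lia.
Qed.

(* For K <= n the sum is exactly 3 h^K - 2 h^n, which the induction tracks. *)
Lemma sum_geom01_tail K n :
  \sum_(k <- root_range n | K%:Z < `|k|) geom01 k <= 3 * h ^+ K :> R.
Proof.
have h0 m : 0 <= h ^+ m by rewrite exprn_ge0 // invr_ge0.
have [nK|Kn] := ltnP n K; first by rewrite sum_geom01_tail0 //; have := h0 K; lra.
suff : \sum_(k <- root_range n | K%:Z < `|k|) geom01 k + 2 * h ^+ n <= 3 * h ^+ K.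
  by have := h0 n; lra.
elim: n Kn => [|n IH].
  rewrite leqn0 => /eqP ->.
  by rewrite /root_range /= !big_cons big_nil /geom01 /=; lra.
rewrite leq_eqVlt => /orP[/eqP ->|Kn].
  rewrite big_root_rangeS sum_geom01_tail0 // ifF ?ifT; try lia.
  by have [_ ->] := geom01_ends n; lra.
rewrite big_root_rangeS ifT ?ifT; try lia.
by have [-> ->] := geom01_ends n; have := IH Kn; rewrite exprS; lra.
Qed.

End Geom01.

(** * Convergence of the local laws *)

Section RestrWeight.
Context {R : realFieldType} (d : nat).
Local Notation F := (seq 'I_d -> int).
Implicit Types w : int -> R.

Fixpoint restr_weight w (r : nat) (g : F) : R :=
  if r is r'.+1 then
    if [forall i : 'I_d, `|g [:: i] - g [::]| <= 1]
    then \prod_(i < d) restr_weight w r' (subtree g i) else 0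
  else if `[< g = at_root (g [::]) >] then w (g [::]) else 0.

Lemma restr_weightZ c w r g :
  restr_weight (fun k => c * w k) r g = c ^+ (d ^ r) * restr_weight w r g.
Proof.
elim: r g => [|r IH] g /=; first by case: ifP; rewrite ?mulr0 // expn0 expr1.
case: ifP => _; last by rewrite mulr0.
under eq_bigr do rewrite IH.
by rewrite big_split /= prodr_const card_ord -exprM expnSr.
Qed.

Lemma restr_weight_le w w' r g : (forall k, 0 <= w k <= w' k) ->
  0 <= restr_weight w r g <= restr_weight w' r g.
Proof.
move=> ww'; elim: r g => [|r IH] g /=; first by case: ifP => _; rewrite ?lexx.
case: ifP => _; last by rewrite lexx.
by rewrite prodr_ge0 ?ler_prod // => i _; case/andP: (IH (subtree g i)).
Qed.

Lemma restr_weight_le1 w r g : (forall k, 0 <= w k <= 1) -> restr_weight w r g <= 1.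
Proof.
move=> w01; elim: r g => [|r IH] g /=.
  by case: ifP => _; [case/andP: (w01 (g [::]))|rewrite ler01].
case: ifP => _; last by rewrite ler01.
have ww k : 0 <= w k <= w k by rewrite lexx andbT; case/andP: (w01 k).
apply: prodr_ile1 => i _; rewrite IH andbT.
by case/andP: (restr_weight_le w w r (subtree g i) ww).
Qed.

End RestrWeight.

Definition ratio_mass {R : realFieldType} (d n : nat) : R :=
  \sum_(k <- root_range n) root_ratio d n k.

Section LawSplit.
Context {R : realType} (d : nat).
Hypothesis d2 : (2 <= d)%N.
Let d_gt0 : (0 < d)%N := ltnW d2.
Local Notation z n := (fun k : int => (root_count d n k)%:R : R).
Local Notation x := (@root_ratio R d).

Lemma natr_cnt_adm01 n : (cnt (adm01 d n))%:R = z n 1 * ratio_mass d n.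
Proof.
rewrite cnt_adm01 // natr_sum /ratio_mass mulr_sumr.
by apply: eq_bigr => k _; exact: natr_root_countE.
Qed.

Lemma natr_restr_count m r g :
  (restr_count d (m + r) r g)%:R = restr_weight d (z m) r g.
Proof.
elim: r g => [|r IH] g; first by rewrite addn0 restr_count0 //=; case: ifP.
rewrite addnS restr_countS //=; case: ifP => // _.
by rewrite natr_prod; apply: eq_bigr => i _; exact: IH.
Qed.

(* The common factor (z m 1)^(d^r) of numerator and denominator cancels. *)
Lemma law_split m r g : law R d (m + r) r g =
  restr_weight d (x m) r g / (iter r (lip_step d) (x m) 1 * ratio_mass d (m + r)).
Proof.
have zE : z m = (fun k => z m 1 * x m k) := funext (natr_root_countE d d2 m).
rewrite /law -/(restr_count d (m + r) r g) natr_restr_count natr_cnt_adm01.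
have := congr1 (fun f => f 1) (natr_root_count_iter d d2 m r) => /= ->.
rewrite zE restr_weightZ iter_lip_stepZ.
rewrite -[X in _ / X]mulrA -mulf_div divff ?mul1r // expf_neq0 //.
by rewrite pnatr_eq0 -lt0n root_count1_gt0.
Qed.

End LawSplit.

Lemma nondecreasing_bounded_cvgn (R : realType) (u : R ^nat) (M : R) :
  (forall n, u n <= u n.+1) -> (forall n, u n <= M) -> cvgn u.
Proof.
move=> u_nd uM; apply: nondecreasing_is_cvgn; first exact/nondecreasing_seqP.
by exists M => _ [n _ <-].
Qed.

Section LawLimit.
Context {R : realType} (d : nat).
Hypothesis d2 : (2 <= d)%N.
Let d_gt0 : (0 < d)%N := ltnW d2.
Local Notation x := (@root_ratio R d).

Lemma root_ratio_le_succ_ge0 m k : 0 <= x m k <= x m.+1 k.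
Proof. by rewrite root_ratio_ge0 root_ratio_le_succ. Qed.

Lemma root_ratio_ge0_le1 m k : 0 <= x m k <= 1.
Proof.
by rewrite root_ratio_ge0 (le_trans (root_ratio_le_geom01 _ _ _ _)) ?geom01_le1.
Qed.

Lemma ratio_mass_ge1 n : 1 <= ratio_mass d n :> R.
Proof.
rewrite /ratio_mass (bigD1_seq 1) ?root_range_uniq ?mem_root_range //=; last by lia.
rewrite (root_ratio1 d d2 n) lerDl sumr_ge0 // => k _; exact: root_ratio_ge0.
Qed.

Lemma cvgn_restr_weight r g : cvgn (fun m => restr_weight d (x m) r g).
Proof.
apply: (@nondecreasing_bounded_cvgn _ _ 1) => m.
  by case/andP: (restr_weight_le d _ _ r g (root_ratio_le_succ_ge0 m)).
exact/restr_weight_le1/root_ratio_ge0_le1.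
Qed.

Lemma cvgn_iter_lip_step r : cvgn (fun m => iter r (lip_step d) (x m) 1).
Proof.
apply: (@nondecreasing_bounded_cvgn _ _ (iter r (lip_step d) (fun=> 1) 1)) => m.
  apply: iter_lip_step_le => k; [exact: root_ratio_ge0|exact: root_ratio_le_succ].
apply: iter_lip_step_le => k; first exact: root_ratio_ge0.
by case/andP: (root_ratio_ge0_le1 m k).
Qed.

Lemma cvgn_ratio_mass : cvgn (ratio_mass d : R ^nat).
Proof.
apply: (@nondecreasing_bounded_cvgn _ _ 4) => n.
  rewrite /ratio_mass big_root_rangeS /=.
  have := @root_ratio_ge0 R d n.+1 (- n.+1%:Z); have := @root_ratio_ge0 R d n.+1 n.+2%:Z.
  have : \sum_(k <- root_range n) x n k <= \sum_(k <- root_range n) x n.+1 k.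
    by apply: ler_sum => k _; exact: root_ratio_le_succ.
  lra.
apply: le_trans (_ : \sum_(k <- root_range n) geom01 k <= _).
  by apply: ler_sum => k _; exact: root_ratio_le_geom01.
by rewrite sum_geom01 lerBlDr lerDl mulr_ge0 // exprn_ge0 // invr_ge0.
Qed.

Lemma cvgn_law r g : cvgn (fun n => law R d n r g).
Proof.
set W := fun m => restr_weight d (x m) r g.
set D := fun m => iter r (lip_step d) (x m) 1 * ratio_mass d (m + r).
have cD : cvgn D.
  apply: is_cvgM; first exact: cvgn_iter_lip_step.
  by have := cvgn_ratio_mass; rewrite -(cvg_shiftn r) => /cvgP.
have D1 : 1 <= lim (D @ \oo).
  apply: limr_ge => //; apply: nearW => m; rewrite -[1]mulr1 ler_pM //.
    by apply: iter_lip_step_ge1 => [k|]; rewrite ?root_ratio_ge0 ?(root_ratio1 d d2).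
  exact: ratio_mass_ge1.
apply: (cvgP (lim (W @ \oo) / lim (D @ \oo))); rewrite -(cvg_shiftn r) /=.
under eq_fun do rewrite law_split //.
by apply: cvgM; [exact: cvgn_restr_weight|apply: cvgV => //; rewrite gt_eqF //; lra].
Qed.

End LawLimit.

(** * Tightness *)

Definition bounded_on_ball (d r M : nat) : set (seq 'I_d -> int) :=
  [set g | (forall s, (r < size s)%N -> g s = 0) /\ forall s, `|g s| <= M%:Z].

Lemma finite_bounded_on_ball d r M : finite_set (bounded_on_ball d r M).
Proof.
have root_in r' g : bounded_on_ball d r' M g -> g [::] \in root_range M.
  by case=> _ gb; rewrite mem_root_range; have := gb [::]; rewrite ler_norml; lia.
elim: r => [|r IH].
  apply: (@sub_finite_set _ _ (\bigcup_(k in [set` root_range M]) [set at_root k])).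
    move=> g gB; exists (g [::]); first exact: root_in gB.
    by case: gB => gs _; apply/funext=> -[|i s] //=; apply: gs.
  by apply: bigcup_finite; [exact: finite_seq|move=> *; exact: finite_set1].
apply: (@sub_finite_set _ _
    (\bigcup_(k in [set` root_range M]) graft k (fun _ => bounded_on_ball d r M))).
  move=> g gB; exists (g [::]); first exact: root_in gB.
  case: gB => gs gb; split=> // i.
  by split=> [s rs|s]; [apply: gs => /=; lia|exact: gb].
by apply: bigcup_finite; [exact: finite_seq|move=> k _; exact: finite_graft].
Qed.

Definition small_root_restr (d r K : nat) : set (seq 'I_d -> int) :=
  [set g | exists n f, [/\ adm01 d n f, `|f [::]| <= K%:Z & restr d r f = g]].

Lemma finite_small_root_restr d r K : finite_set (small_root_restr d r K).
Proof.
apply: (sub_finite_set _ (finite_bounded_on_ball d r (K + r))).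
move=> _ [n [f [fA fK <-]]]; split=> [s rs|s]; rewrite /restr; first by case: ifP; lia.
case: ifP => sr; last by rewrite normr0.
have [sn|ns] := leqP (size s) n; last by case: fA => fs _ _; rewrite fs.
by move: (adm01_path _ _ _ _ fA sn) fK; rewrite !ler_norml; lia.
Qed.

Section Tightness.
Context {R : realType} (d : nat).
Hypothesis d2 : (2 <= d)%N.
Let d_gt0 : (0 < d)%N := ltnW d2.
Local Notation F := (seq 'I_d -> int).
Local Notation A n := (adm01 d n).
Local Notation h := (2^-1 : R).

Lemma law_ge0 n r g : 0 <= law R d n r g.
Proof. by rewrite divr_ge0. Qed.

Lemma sum_restr_count n r (X : set F) : finite_set X ->
  (\sum_(g <- fset_set X) restr_count d n r g)%N =
  cnt (A n `&` [set f | restr d r f \in (fset_set X : seq F)]).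
Proof. by move=> fX; rewrite cnt_fibers ?fset_uniq //; exact: finite_adm01. Qed.

Lemma law_sum_le1 n r (X : set F) : finite_set X ->
  \sum_(g <- fset_set X) law R d n r g <= 1.
Proof.
move=> fX; rewrite /law -mulr_suml -natr_sum sum_restr_count //.
have [->|A0] := eqVneq (cnt (A n)) 0%N; first by rewrite invr0 mulr0.
rewrite ler_pdivrMr ?mul1r ?ler_nat ?ltr0n ?lt0n //.
by apply: le_cnt; [exact: subIsetl|exact: finite_adm01].
Qed.

Lemma natr_cnt_adm01_tail n (K : nat) :
  (\sum_(k <- root_range n | K%:Z < `|k|) root_count d n k)%:R <=
  3 * h ^+ K * (cnt (A n))%:R.
Proof.
rewrite natr_sum (eq_bigr _ (fun k _ => natr_root_countE d d2 n k)) -mulr_sumr.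
rewrite natr_cnt_adm01 // [X in _ <= X]mulrC -mulrA ler_wpM2l //.
apply: le_trans (_ : 3 * h ^+ K <= _); last first.
  by rewrite ler_peMl ?ratio_mass_ge1 // mulr_ge0 ?exprn_ge0 ?invr_ge0 //; lra.
apply: le_trans (sum_geom01_tail K n); apply: ler_sum => k _.
exact: root_ratio_le_geom01.
Qed.

Lemma natr_cnt_adm01_small n (K : nat) :
  (1 - 3 * h ^+ K) * (cnt (A n))%:R <= (cnt (A n `&` [set f | `|f [::]| <= K%:Z]))%:R.
Proof.
have eA : cnt (A n) = addn
    (\sum_(k <- root_range n | `|k| <= K%:Z) root_count d n k)
    (\sum_(k <- root_range n | K%:Z < `|k|) root_count d n k).
  rewrite cnt_adm01 // (bigID (fun k => `|k| <= K%:Z)) /=.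
  by congr (_ + _)%N; apply: eq_bigl => k; rewrite ltNge.
have := natr_cnt_adm01_tail n K.
by rewrite (cnt_adm01_root d d_gt0 n (fun k => `|k| <= K%:Z)) eA natrD; lra.
Qed.

Lemma law_sum_ge n r (K : nat) :
  1 - 3 * h ^+ K <= \sum_(g <- fset_set (small_root_restr d r K)) law R d n r g.
Proof.
have fX := finite_small_root_restr d r K.
rewrite /law -mulr_suml -natr_sum sum_restr_count //.
have A_gt0 : (0 < cnt (A n))%N.
  apply: leq_trans (root_count1_gt0 d d2 n) _.
  by apply: le_cnt; [exact: subIsetl|exact: finite_adm01].
rewrite ler_pdivlMr ?ltr0n //; apply: le_trans (natr_cnt_adm01_small n K) _.
rewrite ler_nat; apply: le_cnt; last by apply: finite_setIl; exact: finite_adm01.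
move=> f [fA fK]; split=> //=; rewrite in_fset_set // inE.
by exists n, f.
Qed.

End Tightness.

Lemma esum_eq1 (R : realType) (T : choiceType) (p : T -> R) (e : R ^nat) :
  (forall t, 0 <= p t) ->
  (forall X, finite_set X -> \sum_(t <- fset_set X) p t <= 1) ->
  e @ \oo --> 0 ->
  (forall K, exists2 X, finite_set X & 1 - e K <= \sum_(t <- fset_set X) p t) ->
  \esum_(t in [set: T]) (p t)%:E = 1%E.
Proof.
move=> p0 le1 e0 ge; set E := esum _ _.
have E1 : (E <= 1)%E.
  apply: ge_ereal_sup => _ [X [fX _] <-].
  by rewrite fsbig_finite //= sumEFin lee_fin le1.
have Efin : E \is a fin_num.
  by rewrite ge0_fin_numE ?(le_lt_trans E1) ?ltry // esum_ge0 // => t _; rewrite lee_fin.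
have eK K : 1 - e K <= fine E.
  have [X fX le] := ge K; rewrite -lee_fin fineK //; apply: esum_ge.
  by exists X; [split|rewrite fsbig_finite //= sumEFin lee_fin].
have cv : (fun K => 1 - e K) @ \oo --> (1 : R).
  by rewrite -[X in _ --> X]subr0; apply: cvgB => //; exact: cvg_cst.
apply/eqP; rewrite eq_le E1 /= -(fineK Efin) lee_fin.
by apply: (cvgr_to_le cv); exact: nearW.
Qed.

Theorem theorem1p2 (R : realType) (d : nat) : (2 <= d)%N ->
  forall r : nat, exists p : (seq 'I_d -> int) -> R,
    [/\ (forall g, 0 <= p g),
        (\esum_(g in [set: seq 'I_d -> int]) (p g)%:E = 1%E) &
        (forall g, (fun n : nat => law R d n r g) @ \oo --> p g)].
Proof.
move=> d2 r; pose p g := lim ((fun n => law R d n r g) @ \oo).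
have cv g : (fun n => law R d n r g) @ \oo --> p g := cvgn_law d d2 r g.
have cv_sum X : (fun n => \sum_(g <- fset_set X) law R d n r g) @ \oo -->
    \sum_(g <- fset_set X) p g.
  by apply: cvg_big => //; exact: add_continuous.
have p0 g : 0 <= p g by apply: (cvgr_to_ge (cv g)); apply: nearW => n; exact: law_ge0.
exists p; split=> //.
apply: (@esum_eq1 _ _ _ (fun K => 3 * 2^-1 ^+ K)) => // [X fX||K].
- by apply: (cvgr_to_le (cv_sum X)); apply: nearW => n; exact: law_sum_le1.
- rewrite -(mulr0 3); apply: cvgM; first exact: cvg_cst.
  by apply: cvg_expr; rewrite ger0_norm ?invr_ge0 // invf_lt1 //; lra.
- exists (small_root_restr d r K); first exact: finite_small_root_restr.
  by apply: (cvgr_to_ge (cv_sum _)); apply: nearW => n; exact: law_sum_ge.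
Qed.
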